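(* Let $\mathcal{H}$ be a hereditary $\sigma$-ring of sets, let $\mu^*$ be an outer measure on $\mathcal{H}$, let $X$ be a set with $X\cap\bigcup\mathcal{H}\neq\emptyset$, and let $\overline{\overline{S}}$ be the class of all $\mu^{**}$-measurable sets. If $A\in\mathcal{H}$ and $\{L_n\}_{n\ge1}$ is a disjoint sequence of sets in $\overline{\overline{S}}$ with $\bigcup_{n=1}^\infty L_n=L$, then $$\sup_{T\in\overline{\overline{S}}}\sum_{n=1}^\infty\mu^*(A\cap L_n\cap T)=\sum_{n=1}^\infty\sup_{T\in\overline{\overline{S}}}\mu^*(A\cap L_n\cap T).$$
   Context: A nonempty class $\mathcal{E}$ of sets is hereditary if $F\in\mathcal{E}$ whenever $E\in\mathcal{E}$ and $F\subseteq E$. A set $E\in\mathcal{H}$ is $\mu^*$-measurable if $\mu^*(A)=\mu^*(A\cap E)+\mu^*(A\cap E')$ for every $A\in\mathcal{H}$, where $E'$ denotes the complement of $E$. Let $\overline{S}$ denote the class of all $\mu^*$-measurable sets. Let $K=\{B\subseteq X: B\cap E\in\mathcal{H}\text{ for all }E\in\mathcal{H}\}$. A set $Q\in K$ is called $\mu^{**}$-measurable if $Q\cap E$ is $\mu^*$-measurable for every $\mu^*$-measurable $E\in\mathcal{H}$, i.e. for all $A\in\mathcal{H}$ and all $E\in\overline{S}$, $\mu^*(A)=\mu^*[A\cap(Q\cap E)]+\mu^*[A\cap(Q\cap E)']$. *)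

From HB Require Import structures.
From mathcomp Require Import all_boot all_order all_algebra.
From mathcomp Require Import all_classical all_reals ereal sequences.
Set Implicit Arguments. Unset Strict Implicit. Unset Printing Implicit Defensive.
Import Order.TTheory GRing.Theory Num.Theory.
Local Open Scope classical_set_scope.
Local Open Scope ring_scope.
Local Open Scope ereal_scope.

Definition hereditary {U : Type} (H : set (set U)) : Prop :=
  H !=set0 /\ forall E F, H E -> F `<=` E -> H F.

Definition sigma_ring {U : Type} (H : set (set U)) : Prop :=
  H !=set0 /\
  (forall E F, H E -> H F -> H (E `\` F)) /\
  (forall F : nat -> set U, (forall n, H (F n)) -> H (\bigcup_n F n)).

Definition outer_measure_on {R : realType} {U : Type}
    (H : set (set U)) (mu : set U -> \bar R) : Prop :=
  mu set0 = 0 /\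
  (forall E, H E -> 0 <= mu E) /\
  (forall E F, H E -> H F -> E `<=` F -> mu E <= mu F) /\
  (forall F : nat -> set U, (forall n, H (F n)) ->
     mu (\bigcup_n F n) <= \sum_(0 <= n <oo) mu (F n)).

Definition mstar_measurable {R : realType} {U : Type}
    (H : set (set U)) (mu : set U -> \bar R) (E : set U) : Prop :=
  H E /\ forall A, H A -> mu A = mu (A `&` E) + mu (A `&` ~` E).

Definition classK {U : Type} (X : set U) (H : set (set U)) : set (set U) :=
  [set B | B `<=` X /\ forall E, H E -> H (B `&` E)].

Definition mstarstar_measurable {R : realType} {U : Type}
    (X : set U) (H : set (set U)) (mu : set U -> \bar R) (Q : set U) : Prop :=
  classK X H Q /\
  forall E, mstar_measurable H mu E ->
    forall A, H A -> mu A = mu (A `&` (Q `&` E)) + mu (A `&` ~` (Q `&` E)).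

(* The supremum on the right is attained at T = L_n, so the right-hand side is
   just the sum of the mu (A `&` L_n).  The left-hand side is at most that sum
   by monotonicity; conversely, the finite union T_N of L_0, ..., L_(N-1) is
   mu**-measurable and cuts nothing off the first N terms, so every partial sum
   is below the left-hand supremum. *)

From HB Require Import structures.
From mathcomp Require Import all_boot all_order all_algebra.
From mathcomp Require Import all_classical all_reals ereal sequences.
From mathcomp Require Import topology normedtype.
Set Implicit Arguments. Unset Strict Implicit. Unset Printing Implicit Defensive.
Import Order.TTheory GRing.Theory Num.Theory.
Local Open Scope classical_set_scope.
Local Open Scope ring_scope.
Local Open Scope ereal_scope.

Section hereditary_sigma_ring.
Variables (U : Type) (H : set (set U)).
Hypotheses (hH : hereditary H) (sH : sigma_ring H).

Lemma hereditary_sub E F : H E -> F `<=` E -> H F.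
Proof. by case: hH => _; apply. Qed.

Lemma hereditary_set0 : H set0.
Proof. by case: hH => -[E HE] _; apply: hereditary_sub HE _. Qed.

Lemma hereditary_setIl E F : H E -> H (E `&` F).
Proof. by move=> HE; apply: hereditary_sub HE _; apply: subIsetl. Qed.

Lemma sigma_ring_setU E F : H E -> H F -> H (E `|` F).
Proof.
move=> HE HF; case: sH => _ [_ bigcupH].
have -> : E `|` F = \bigcup_n (if n == 0%N then E else F).
  apply/seteqP; split=> [x [Ex|Fx]|x [[|n] _ /= ?]]; [by exists 0%N|by exists 1%N|by left|by right].
by apply: bigcupH => -[].
Qed.

End hereditary_sigma_ring.

Section mstarstar_measurable.
Variables (R : realType) (U : Type) (H : set (set U)) (mu : set U -> \bar R) (X : set U).
Hypotheses (hH : hereditary H) (sH : sigma_ring H) (omu : outer_measure_on H mu).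

Lemma mstar_measurable_setU M1 M2 :
  mstar_measurable H mu M1 -> mstar_measurable H mu M2 ->
  mstar_measurable H mu (M1 `|` M2).
Proof.
move=> [HM1 split1] [HM2 split2]; split; first exact: (sigma_ring_setU sH).
move=> A HA.
have HAM1c : H (A `&` ~` M1) by exact: (hereditary_setIl hH).
have HAM12 : H (A `&` (M1 `|` M2)) by exact: (hereditary_setIl hH).
rewrite (split1 _ HA) (split2 _ HAM1c) (split1 _ HAM12) addeA.
congr (mu _ + mu _ + mu _); apply/seteqP; split=> x /=; rewrite /setC; tauto.
Qed.

Lemma mstarstar_measurable_setU Q1 Q2 :
  mstarstar_measurable X H mu Q1 -> mstarstar_measurable X H mu Q2 ->
  mstarstar_measurable X H mu (Q1 `|` Q2).
Proof.
move=> [[XQ1 KQ1] split1] [[XQ2 KQ2] split2]; split.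
  split; first by move=> x [/XQ1|/XQ2].
  by move=> E HE; rewrite setIUl; apply: (sigma_ring_setU sH); [apply: KQ1|apply: KQ2].
move=> E mE; rewrite setIUl.
have [HE _] := mE.
by apply: (mstar_measurable_setU (conj (KQ1 E HE) (split1 E mE))
                                 (conj (KQ2 E HE) (split2 E mE))).2.
Qed.

Lemma mstarstar_measurable_set0 : mstarstar_measurable X H mu set0.
Proof.
split; first by split=> // E _; rewrite set0I; exact: (hereditary_set0 hH).
by move=> E _ A _; case: omu => mu0 _; rewrite set0I setI0 setC0 setIT mu0 add0e.
Qed.

Lemma mstarstar_measurable_bigcup_ord (F : nat -> set U) N :
  (forall n, mstarstar_measurable X H mu (F n)) ->
  mstarstar_measurable X H mu (\bigcup_(k < N) F k).
Proof.
move=> mF; rewrite bigcup_mkord.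
elim: N => [|N IH]; first by rewrite big_ord0; exact: mstarstar_measurable_set0.
by rewrite big_ord_recr; apply: mstarstar_measurable_setU.
Qed.

Lemma ereal_sup_mu_setI (P : set (set U)) B Q :
  H B -> P Q -> B `<=` Q -> ereal_sup [set mu (B `&` T) | T in P] = mu B.
Proof.
move=> HB PQ BQ; case: omu => _ [_ [mu_mono _]].
apply/le_anti/andP; split; last first.
  by apply: ereal_sup_ubound; exists Q => //; rewrite setIidl.
apply: ge_ereal_sup => _ [T _ <-].
have HBT : H (B `&` T) by exact: (hereditary_setIl hH).
by apply: mu_mono => //; apply: subIsetl.
Qed.

Lemma ereal_sup_nneseries_mu_setI_le (P : set (set U)) A (F : nat -> set U) :
  H A ->
  ereal_sup [set \sum_(0 <= n <oo) mu (A `&` F n `&` T) | T in P]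
  <= \sum_(0 <= n <oo) mu (A `&` F n).
Proof.
move=> HA; case: omu => _ [mu_ge0 [mu_mono _]].
apply: ge_ereal_sup => _ [T _ <-].
have HAFT n : H (A `&` F n `&` T) by do 2 apply: (hereditary_setIl hH).
apply: lee_nneseries => [n _ _|n _]; first exact: mu_ge0.
have HAF : H (A `&` F n) by exact: (hereditary_setIl hH).
by apply: mu_mono => //; apply: subIsetl.
Qed.

Lemma nneseries_mu_setI_le_ereal_sup A (F : nat -> set U) :
  H A -> (forall n, mstarstar_measurable X H mu (F n)) ->
  \sum_(0 <= n <oo) mu (A `&` F n)
  <= ereal_sup [set \sum_(0 <= n <oo) mu (A `&` F n `&` T)
               | T in mstarstar_measurable X H mu].
Proof.
move=> HA mF; case: omu => _ [mu_ge0 _].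
have mu_setI_ge0 T n : 0 <= mu (A `&` F n `&` T).
  by apply: mu_ge0; do 2 apply: (hereditary_setIl hH).
apply: lime_le.
  by apply: is_cvg_nneseries => n _ _; apply: mu_ge0; exact: (hereditary_setIl hH).
apply: nearW => N; pose TN := \bigcup_(k < N) F k.
apply: le_trans (ereal_sup_ubound _); last first.
  by exists TN => //; exact: mstarstar_measurable_bigcup_ord.
apply: le_trans (nneseries_lim_ge N _); last by move=> n _ _; exact: mu_setI_ge0.
rewrite !big_mkord; apply: lee_sum => i _.
by rewrite [A `&` F i `&` TN]setIidl // => x [_ Fix]; exists i => //=; exact: ltn_ord.
Qed.

End mstarstar_measurable.

Theorem lemma3p3 (R : realType) (U : Type) (H : set (set U))
  (mu : set U -> \bar R) (X : set U)
  (hH : hereditary H) (sH : sigma_ring H) (omu : outer_measure_on H mu)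
  (hX : (X `&` \bigcup_(E in H) E) !=set0)
  (A : set U) (Ln : nat -> set U) (L : set U)
  (hA : H A)
  (hLn : forall n, mstarstar_measurable X H mu (Ln n))
  (hdisj : trivIset setT Ln)
  (hL : \bigcup_n Ln n = L) :
  ereal_sup [set \sum_(0 <= n <oo) mu (A `&` Ln n `&` T)
             | T in mstarstar_measurable X H mu]
  = \sum_(0 <= n <oo)
      ereal_sup [set mu (A `&` Ln n `&` T) | T in mstarstar_measurable X H mu].
Proof.
have sup_attained n :
    ereal_sup [set mu (A `&` Ln n `&` T) | T in mstarstar_measurable X H mu]
    = mu (A `&` Ln n).
  apply: (ereal_sup_mu_setI hH omu (hereditary_setIl hH _ hA) (hLn n)).
  exact: subIsetr.
rewrite (eq_eseriesr (fun n _ => sup_attained n)).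
apply/le_anti/andP; split.
- exact: (@ereal_sup_nneseries_mu_setI_le _ _ _ _ hH omu _ A Ln hA).
- exact: (nneseries_mu_setI_le_ereal_sup hH sH omu hA hLn).
Qed.
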